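(* Let $\mathcal{L}\subset\mathbb{S}^n$ be a regular linear subspace. The following two conditions are equivalent: (a) there exists a non-zero $K\in\mathcal{L}$ such that $\mathcal{L}\subseteq(\{K\}^\perp)^{-1}$; (b) there exists a non-zero $K\in\mathcal{L}$ such that $\det(P+tK)=\det(P)$ for all $P\in\mathcal{L}$ and all $t\in\mathbb{C}$.
   Context: $\mathbb{S}^n$ denotes the space of complex symmetric $n\times n$ matrices. A linear subspace $\mathcal{L}$ is regular if it contains a full-rank matrix. For a linear subspace $\mathcal{M}\subseteq\mathbb{S}^n$, $\mathcal{M}^{-1}$ denotes its reciprocal variety, the Zariski closure of the set of inverses of invertible matrices in $\mathcal{M}$. $\{K\}^\perp=\{\Sigma\in\mathbb{S}^n:\mathrm{tr}(K\Sigma)=0\}$. *)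

From HB Require Import structures.
From mathcomp Require Import all_boot all_order all_algebra.
From mathcomp Require Import complex.
From mathcomp Require Import Rstruct.
From mathcomp Require mpoly.
Set Implicit Arguments. Unset Strict Implicit. Unset Printing Implicit Defensive.
Import Order.TTheory GRing.Theory Num.Theory.
Local Open Scope ring_scope.

Definition CC : numClosedFieldType := (Rdefinitions.R)[i]%C.

Definition mxcoords n (A : 'M[CC]_n) : 'I_(n * n) -> CC := fun k => mxvec A 0 k.

Definition zariski_closure n (S : 'M[CC]_n -> Prop) : 'M[CC]_n -> Prop :=
  fun X => forall p : mpoly.mpoly (n * n) CC,
    (forall Y, S Y -> mpoly.meval (mxcoords Y) p = 0) ->
    mpoly.meval (mxcoords X) p = 0.

Definition symmetric_mx n (A : 'M[CC]_n) : Prop := A^T = A.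

Definition sym_perp n (K : 'M[CC]_n) : 'M[CC]_n -> Prop :=
  fun S => symmetric_mx S /\ \tr (K *m S) = 0.

Definition reciprocal_variety n (M : 'M[CC]_n -> Prop) : 'M[CC]_n -> Prop :=
  zariski_closure (fun X => exists2 S, M S & S \in unitmx /\ X = invmx S).

From HB Require Import structures.
From mathcomp Require Import all_boot all_order all_algebra.
From mathcomp Require Import mpoly.
Set Implicit Arguments. Unset Strict Implicit. Unset Printing Implicit Defensive.
Import Order.TTheory GRing.Theory Num.Theory.
Local Open Scope ring_scope.

(* Jacobi's formula d/dt det (P + t K) = tr (K adj (P + t K)) turns (b) into
   tr (K adj P) = 0 for all P in L.  Since adj (S^-1) = det (S^-1) S, the
   polynomial X |-> tr (K adj X) vanishes on the inverses of the invertible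
   matrices of {K}^perp, hence on their Zariski closure: (a) implies (b).
   Conversely, under (b) every invertible Q in L is the inverse of an element
   Q^-1 of {K}^perp.  As L is regular, the determinant restricted to the line
   through any P in L and an invertible P0 in L is a non-zero polynomial, so a
   polynomial vanishing at the invertible points of L vanishes on all of L. *)

Section PolyDeriv.
Variable R : comNzRingType.

Lemma deriv_prod n (F : 'I_n -> {poly R}) :
  (\prod_(i < n) F i)^`() =
  \sum_(i < n) \prod_(j < n) (if j == i then (F j)^`() else F j).
Proof.
elim: n F => [|n IHn] F; first by rewrite !big_ord0 -polyC1 derivC.
have neq_max (j : 'I_n) : (widen_ord (leqnSn n) j == ord_max) = false.
  by rewrite -val_eqE /= ltn_eqF.
rewrite big_ord_recr derivM IHn mulr_suml [RHS]big_ord_recr /=.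
congr (_ + _); last first.
  by rewrite big_ord_recr eqxx; congr (_ * _); apply: eq_bigr => j _; rewrite neq_max.
by apply: eq_bigr => i _; rewrite big_ord_recr eq_sym neq_max.
Qed.

Lemma deriv_det n (A : 'M[{poly R}]_n) :
  (\det A)^`() =
  \sum_(i < n) \det (\matrix_(j, k) if j == i then (A j k)^`() else A j k).
Proof.
rewrite /determinant (big_morph _ (@derivD _) (@deriv0 _)).
under eq_bigr => s _ do
  rewrite -[(-1) ^+ _](rmorph_sign (@polyC R)) deriv_mulC deriv_prod mulr_sumr.
rewrite exchange_big /=; apply: eq_bigr => i _; apply: eq_bigr => s _.
rewrite rmorph_sign; congr (_ * _); apply: eq_bigr => j _.
by rewrite mxE; case: (j == i).
Qed.
End PolyDeriv.

Section Pencil.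
Variables (R : comNzRingType) (n : nat).
Implicit Types (P D : 'M[R]_n) (t : R).

Definition mx_pencil P D : 'M[{poly R}]_n := map_mx polyC P + 'X *: map_mx polyC D.

Lemma horner_mx_pencil P D t : map_mx (horner_eval t) (mx_pencil P D) = P + t *: D.
Proof. by apply/matrixP => i j; rewrite !mxE /= horner_evalE !hornerE. Qed.

Lemma horner_det_pencil P D t : (\det (mx_pencil P D)).[t] = \det (P + t *: D).
Proof. by rewrite -horner_evalE -det_map_mx horner_mx_pencil. Qed.

Lemma horner_deriv_det_pencil P D t :
  (\det (mx_pencil P D))^`().[t] = \tr (D *m \adj (P + t *: D)).
Proof.
rewrite deriv_det -horner_evalE rmorph_sum; apply: eq_bigr => i _.
rewrite -det_map_mx (expand_det_row _ i) mxE; apply: eq_bigr => k _.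
rewrite !mxE eqxx /= horner_evalE !(derivD, derivZ, derivC, derivX, deriv_mulC) /=.
rewrite (mulrC 'X) deriv_mulC derivX mulr1 add0r hornerC -(horner_mx_pencil P D t).
congr (_ * _); rewrite /cofactor; congr (_ * \det _); apply/matrixP => a b.
by rewrite !mxE eq_sym (negbTE (neq_lift _ _)).
Qed.
End Pencil.

Section PolyFunctions.
Variable R : numDomainType.
Implicit Type p q : {poly R}.

Lemma eq_poly_of_horner p q : (forall x, p.[x] = q.[x]) -> p = q.
Proof.
move=> epq; apply/eqP; rewrite -subr_eq0; apply/eqP.
apply: (@roots_geq_poly_eq0 _ _ [seq i%:R | i <- iota 0 (size (p - q))]).
- by apply/allP => _ /mapP[i _ ->]; rewrite rootE !hornerE epq subrr.
- by rewrite map_inj_uniq ?iota_uniq // => i j /eqP; rewrite eqr_nat => /eqP.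
- by rewrite size_map size_iota.
Qed.

Lemma deriv_eq0_horner_const p : p^`() = 0 <-> forall x, p.[x] = p.[0].
Proof.
split=> [dp0 x | pconst]; last first.
  by rewrite (@eq_poly_of_horner p (p.[0])%:P) ?derivC // => x; rewrite hornerC.
suff -> : p = (p`_0)%:P by rewrite !hornerC.
apply/polyP => -[|i]; rewrite coefC //=.
by have /eqP := congr1 (coefp i) dp0; rewrite /= coef_deriv coef0 mulrn_eq0 => /eqP.
Qed.
End PolyFunctions.

Lemma det_pencil_const_iff (R : numDomainType) n (P K : 'M[R]_n) :
  (forall t, \det (P + t *: K) = \det P) <->
  (forall t, \tr (K *m \adj (P + t *: K)) = 0).
Proof.
set q := \det (mx_pencil P K).
have qE t : q.[t] = \det (P + t *: K) by rewrite horner_det_pencil.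
have q'E t : q^`().[t] = \tr (K *m \adj (P + t *: K)) by rewrite horner_deriv_det_pencil.
have -> : (forall t, \det (P + t *: K) = \det P) <-> q^`() = 0.
  by rewrite deriv_eq0_horner_const; split=> qc t; move: (qc t); rewrite !qE scale0r addr0.
split=> [q'0 t | tr0]; first by rewrite -q'E q'0 horner0.
by apply: eq_poly_of_horner => t; rewrite q'E tr0 horner0.
Qed.

Lemma tr_mul_adj_unitmx (R : comUnitRingType) n (A B : 'M[R]_n) :
  A \in unitmx -> \tr (B *m \adj A) = \det A * \tr (B *m invmx A).
Proof.
by move=> uA; rewrite /invmx uA -scalemxAr mxtraceZ mulrA divrr ?mul1r // -unitmxE.
Qed.

Lemma sym_perp_invmx n (K Q : 'M[CC]_n) :
  symmetric_mx Q -> Q \in unitmx -> \tr (K *m \adj Q) = 0 -> sym_perp K (invmx Q).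
Proof.
move=> Qsym uQ; rewrite tr_mul_adj_unitmx // => /eqP; rewrite mulf_eq0.
have /negbTE-> : \det Q != 0 by rewrite -unitfE -unitmxE.
by move=> /eqP trKQ; split; rewrite // /symmetric_mx trmx_inv Qsym.
Qed.

Lemma meval_line_poly (R : comNzRingType) N (p : {mpoly R[N]}) (a b : 'I_N -> R) :
  exists q : {poly R}, forall s, q.[s] = meval (fun k => a k + s * b k) p.
Proof.
exists (\sum_(m <- msupp p) (p@_m)%:P * \prod_i ((a i)%:P + (b i)%:P * 'X) ^+ m i).
move=> s; rewrite mevalE -horner_evalE rmorph_sum; apply: eq_bigr => m _.
rewrite rmorphM rmorph_prod /= horner_evalE hornerC; congr (_ * _).
by apply: eq_bigr => i _; rewrite rmorphXn /= horner_evalE !hornerE mulrC.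
Qed.

Definition generic_mx n : 'M[{mpoly CC[n * n]}]_n := \matrix_(i, j) 'X_(mxvec_index i j).

Lemma meval_generic_mx n (Y : 'M[CC]_n) :
  map_mx (meval (mxcoords Y)) (generic_mx n) = Y.
Proof. by apply/matrixP => i j; rewrite !mxE mevalXU /mxcoords mxvecE. Qed.

Lemma tr_adj_eq0_of_reciprocal n (K P : 'M[CC]_n) :
  reciprocal_variety (sym_perp K) P -> \tr (K *m \adj P) = 0.
Proof.
pose f := \tr (map_mx (@mpolyC _ _) K *m \adj (generic_mx n)).
have fE Y : meval (mxcoords Y) f = \tr (K *m \adj Y).
  rewrite -trace_map_mx map_mxM map_mx_adj meval_generic_mx; congr (\tr (_ *m _)).
  by apply/matrixP => i j; rewrite !mxE; exact: mevalC.
move=> PinR; rewrite -fE; apply: PinR => _ [S [_ trKS] [uS ->]].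
by rewrite fE tr_mul_adj_unitmx ?unitmx_inv // invmxK trKS mulr0.
Qed.

Lemma zariski_closure_unit_line n (S : 'M[CC]_n -> Prop) (P D : 'M[CC]_n) :
  P + D \in unitmx -> (forall s, P + s *: D \in unitmx -> S (P + s *: D)) ->
  zariski_closure S P.
Proof.
move=> uPD PDinS p pS.
have [q qE] := meval_line_poly p (mxcoords P) (mxcoords D).
have {}qE s : q.[s] = meval (mxcoords (P + s *: D)) p.
  by rewrite qE; apply: meval_eq => k; rewrite /mxcoords linearD linearZ /= !mxE.
have c_neq0 : \det (mx_pencil P D) != 0.
  apply: contraTneq uPD => c0.
  by rewrite unitmxE unitfE -[D]scale1r -horner_det_pencil c0 horner0 eqxx.
have : q * \det (mx_pencil P D) = 0.
  apply: eq_poly_of_horner => s; rewrite hornerM horner0 horner_det_pencil.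
  have [uPsD|] := boolP (P + s *: D \in unitmx); first by rewrite qE pS ?mul0r //; apply: PDinS.
  by rewrite unitmxE unitfE negbK => /eqP->; rewrite mulr0.
move/eqP; rewrite mulf_eq0 (negbTE c_neq0) orbF => /eqP q0.
by have := qE 0; rewrite q0 horner0 scale0r addr0.
Qed.

Theorem lemma6p5 (n m : nat) (Lb : 'M[CC]_(m, n * n)) :
  (forall A : 'M[CC]_n, (A \in Lb)%MS -> symmetric_mx A) ->
  (exists2 P : 'M[CC]_n, (P \in Lb)%MS & P \in unitmx) ->
  (exists K : 'M[CC]_n, [/\ (K \in Lb)%MS, K != 0 &
     forall P : 'M[CC]_n, (P \in Lb)%MS -> reciprocal_variety (sym_perp K) P])
  <->
  (exists K : 'M[CC]_n, [/\ (K \in Lb)%MS, K != 0 &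
     forall (P : 'M[CC]_n) (t : CC), (P \in Lb)%MS -> \det (P + t *: K) = \det P]).
Proof.
move=> Lsym [P0 LP0 uP0].
have Lpencil P D t : (P \in Lb)%MS -> (D \in Lb)%MS -> (P + t *: D \in Lb)%MS.
  by move=> LP LD; rewrite linearD linearZ /= addmx_sub ?scalemx_sub.
split=> -[K [LK K_neq0 HK]]; exists K; split=> //.
  move=> P t LP; move: t; apply/det_pencil_const_iff => t.
  exact/tr_adj_eq0_of_reciprocal/HK/Lpencil.
move=> P LP; apply: (@zariski_closure_unit_line _ _ _ (P0 + (-1) *: P)).
  by rewrite scaleN1r addrC subrK.
move=> s uQ; exists (invmx (P + s *: (P0 + (-1) *: P))); last first.
  by rewrite unitmx_inv invmxK.
have LQ := Lpencil _ _ s LP (Lpencil _ _ (-1) LP0 LP).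
apply: sym_perp_invmx (Lsym _ LQ) uQ _.
have /det_pencil_const_iff/(_ 0) := fun t => HK _ t LQ.
by rewrite scale0r addr0.
Qed.
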